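(* Let $M_1$ be the trefoil exterior, with $\pi_1(M_1)=B_3=\langle\sigma_1,\sigma_2\mid\sigma_1\sigma_2\sigma_1=\sigma_2\sigma_1\sigma_2\rangle$, peripheral subgroup $\langle\sigma_2,\Delta^2\rangle$ where $\Delta=\sigma_1\sigma_2\sigma_1$ (meridian $\sigma_2$), and let $M_2$ be the twisted $I$-bundle over the Klein bottle, with $\pi_1(M_2)=\langle x,y\mid xyx^{-1}=y^{-1}\rangle$ and peripheral subgroup $\langle y,x^2\rangle$. Let $M=M_1\cup_\phi M_2$, where the boundary homeomorphism $\phi$ acts on peripheral subgroups by $\phi(\sigma_2)=y^{-1}$, $\phi(\Delta^2)=y^{-1}x^2$. Then there is no slope $\alpha$ on $\partial M_1$ such that both $\alpha$ and $\phi(\alpha)$ are left-orderable slopes; i.e. the criterion ''a left-orderable slope $\alpha$ with $\phi_*(\alpha)$ left-orderable implies $\pi_1(M)$ left-orderable'' cannot be applied to $M$.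
   Context: For a 3-manifold $N$ with torus boundary, a slope is an isotopy class of essential simple closed curve on $\partial N$ (a primitive peripheral element up to sign), and it is a left-orderable slope if $\pi_1(N)/\langle\langle\alpha\rangle\rangle$ (the fundamental group of the Dehn filling along $\alpha$) is left-orderable; the trivial group is not left-orderable. *)

(* Finitely presented groups are encoded by words over a
   generating set; the group <S | R> is words modulo the congruence [weq R]
   generated by free cancellation and insertion/deletion of relators. *)
From mathcomp Require Import all_boot all_order all_algebra.
Set Implicit Arguments. Unset Strict Implicit. Unset Printing Implicit Defensive.
Import GRing.Theory Num.Theory.

(* A letter is a generator together with an "inverse" flag (true = inverse). *)
Definition word (S : Type) := seq (S * bool).

Definition winv (S : Type) (w : word S) : word S :=
  rev (map (fun l => (l.1, ~~ l.2)) w).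

Definition wpow (S : Type) (w : word S) (n : int) : word S :=
  match n with
  | Posz k => flatten (nseq k w)
  | Negz k => flatten (nseq k.+1 (winv w))
  end.

Inductive weq (S : Type) (R : word S -> Prop) : word S -> word S -> Prop :=
| weq_refl w : weq R w w
| weq_sym u v : weq R u v -> weq R v u
| weq_trans u v w : weq R u v -> weq R v w -> weq R u w
| weq_cancel u v s b : weq R (u ++ (s, b) :: (s, ~~ b) :: v) (u ++ v)
| weq_rel u v r : R r -> weq R (u ++ r ++ v) (u ++ v).

Definition left_orderable (S : Type) (R : word S -> Prop) : Prop :=
  (exists w : word S, ~ weq R w [::]) /\
  exists lt : word S -> word S -> Prop,
    (forall u u' v v', weq R u u' -> weq R v v' -> lt u v -> lt u' v') /\
    (forall u, ~ lt u u) /\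
    (forall u v w, lt u v -> lt v w -> lt u w) /\
    (forall u v, weq R u v \/ lt u v \/ lt v u) /\
    (forall u v w, lt u v -> lt (w ++ u) (w ++ v)).

(* Trefoil exterior: pi_1 = B_3 = <s1, s2 | s1 s2 s1 = s2 s1 s2>. *)
Inductive genB3 := s1 | s2.
Definition braid_rel : word genB3 :=
  [:: (s1, false); (s2, false); (s1, false); (s2, true); (s1, true); (s2, true)].
Definition Delta : word genB3 := [:: (s1, false); (s2, false); (s1, false)].
Definition M1_periph (p q : int) : word genB3 :=
  wpow [:: (s2, false)] p ++ wpow (Delta ++ Delta) q.
(* Relators of pi_1(M1(alpha)) for alpha = sigma_2^p Delta^(2q). *)
Definition M1_filling (p q : int) (r : word genB3) : Prop :=
  r = braid_rel \/ r = M1_periph p q.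

(* Twisted I-bundle over the Klein bottle: <x, y | x y x^-1 = y^-1>. *)
Inductive genK := gx | gy.
Definition klein_rel : word genK :=
  [:: (gx, false); (gy, false); (gx, true); (gy, false)].
(* phi(sigma_2^p Delta^(2q)) = (y^-1)^p (y^-1 x^2)^q. *)
Definition M2_periph_phi (p q : int) : word genK :=
  wpow [:: (gy, true)] p ++ wpow [:: (gy, true); (gx, false); (gx, false)] q.
Definition M2_filling (p q : int) (r : word genK) : Prop :=
  r = klein_rel \/ r = M2_periph_phi p q.

From mathcomp Require Import all_boot all_order all_algebra.
From Stdlib Require Import Setoid Morphisms.
Set Implicit Arguments. Unset Strict Implicit.

(* If q = 0 the slope is sigma_2^(+-1) and the filling of the trefoil exterior
   kills the meridian sigma_2; the braid relation then kills sigma_1, so the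
   group is trivial.  If q <> 0, the filled Klein bottle group is a quotient
   of <x, y | x y x^-1 = y^-1, y^-(p+q) x^(2q)>: conjugating the peripheral
   relation by x inverts the y-part and fixes x^(2q), so y^(p+q) has square
   1.  In a left-orderable group there is no torsion, hence y^(p+q) = 1,
   then x^(2q) = 1, x = 1 and finally y^2 = 1, y = 1: the group is trivial. *)

Section WordGroup.
Variables (S : Type) (R : word S -> Prop).
Local Notation "u ~~ v" := (weq R u v) (at level 70).
Local Hint Resolve weq_refl : core.

Lemma weq_catl w u v : u ~~ v -> (w ++ u) ~~ (w ++ v).
Proof.
elim=> {u v} [u | u v _ | u v x _ uv _ vx | u v s b | u v r Rr].
- exact: weq_refl.
- exact: weq_sym.
- exact: weq_trans vx.
- by rewrite !catA; apply: weq_cancel.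
- by rewrite !catA -(catA _ r); apply: weq_rel.
Qed.

Lemma weq_catr w u v : u ~~ v -> (u ++ w) ~~ (v ++ w).
Proof.
elim=> {u v} [u | u v _ | u v x _ uv _ vx | u v s b | u v r Rr].
- exact: weq_refl.
- exact: weq_sym.
- exact: weq_trans vx.
- by rewrite -!catA /=; apply: weq_cancel.
- by rewrite -!catA; apply: weq_rel.
Qed.

Global Instance weq_equiv : Equivalence (weq R).
Proof. by split; [exact: weq_refl | exact: weq_sym | exact: weq_trans]. Qed.

Global Instance weq_cat_proper :
  Proper (weq R ==> weq R ==> weq R) (@cat (S * bool)).
Proof.
move=> u u' uu' v v' vv'.
by apply: (@weq_trans _ _ _ (u ++ v')); [exact: weq_catl | exact: weq_catr].
Qed.

Lemma weq_relator r : R r -> r ~~ [::].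
Proof. by move=> Rr; have := weq_rel [::] [::] Rr; rewrite cats0. Qed.

Lemma winv_cat (u v : word S) : winv (u ++ v) = winv v ++ winv u.
Proof. by rewrite /winv map_cat rev_cat. Qed.

Lemma winvK (w : word S) : winv (winv w) = w.
Proof. by elim: w => // [[s b] w IHw]; rewrite -cat1s !winv_cat IHw /= negbK. Qed.

Lemma catwV w : (w ++ winv w) ~~ [::].
Proof.
elim: w => [|[s b] w IHw]; first reflexivity.
rewrite -cat1s winv_cat catA -(catA [:: _]) IHw /=.
exact: (weq_cancel R [::] [::] s b).
Qed.

Lemma catVw w : (winv w ++ w) ~~ [::].
Proof. by have := catwV (winv w); rewrite winvK. Qed.

Lemma weq_winv u v : u ~~ v -> winv u ~~ winv v.
Proof.
move=> uv; transitivity (winv u ++ v ++ winv v); first by rewrite catwV cats0.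
by rewrite catA -(weq_catl (winv u) uv) catVw.
Qed.

Lemma weq_rot_nil u v : (u ++ v) ~~ [::] -> (v ++ u) ~~ [::].
Proof.
move=> uv; transitivity (v ++ u ++ v ++ winv v); first by rewrite catwV cats0.
by rewrite (catA u) uv catwV.
Qed.

Lemma weq_catV_nil u v : (u ++ winv v) ~~ [::] -> u ~~ v.
Proof.
move=> uv; transitivity (u ++ winv v ++ v); first by rewrite catVw cats0.
by rewrite catA uv.
Qed.

Lemma weq_rcancel_nil u w : (u ++ w) ~~ w -> u ~~ [::].
Proof.
move=> uw; transitivity (u ++ w ++ winv w); first by rewrite catwV cats0.
by rewrite catA uw catwV.
Qed.

Lemma letter_nil s b : [:: (s, false)] ~~ [::] -> [:: (s, b)] ~~ [::].
Proof.
case: b => // s1; transitivity ([:: (s, false)] ++ [:: (s, true)]).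
  by rewrite s1.
exact: (weq_cancel R [::] [::] s false).
Qed.

Lemma weq_all_nil : (forall s, [:: (s, false)] ~~ [::]) -> forall w, w ~~ [::].
Proof.
move=> gen1; elim=> [|[s b] w IHw]; first reflexivity.
by rewrite -cat1s IHw letter_nil.
Qed.

Definition wexpn (w : word S) k := flatten (nseq k w).

Lemma wexpnS (w : word S) k : wexpn w k.+1 = w ++ wexpn w k.
Proof. by []. Qed.

Lemma wexpn_swap (w : word S) k : wexpn w k ++ w = w ++ wexpn w k.
Proof. by elim: k => /= [|k IHk]; rewrite ?cats0 // -catA IHk. Qed.

Lemma winv_wexpn (w : word S) k : winv (wexpn w k) = wexpn (winv w) k.
Proof. by elim: k => //= k IHk; rewrite winv_cat IHk wexpn_swap. Qed.

Lemma winv_wpow (w : word S) n : winv (wpow w n) = wpow (winv w) n.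
Proof. by case: n => k; [exact: winv_wexpn | exact: (winv_wexpn _ k.+1)]. Qed.

Lemma conj_wexpn x u v k :
  (x ++ u) ~~ (v ++ x) -> (x ++ wexpn u k) ~~ (wexpn v k ++ x).
Proof.
move=> xuv; elim: k => /= [|k IHk]; first by rewrite cats0.
by rewrite catA xuv -catA IHk catA.
Qed.

Lemma conj_winv x u v : (x ++ u) ~~ (v ++ x) -> (x ++ winv u) ~~ (winv v ++ x).
Proof.
move=> xuv; transitivity (winv v ++ v ++ x ++ winv u).
  by rewrite catA catVw.
by rewrite (catA v) -xuv -catA catwV cats0.
Qed.

Lemma conj_wpow x u v n :
  (x ++ u) ~~ (v ++ x) -> (x ++ wpow u n) ~~ (wpow v n ++ x).
Proof.
case: n => k xuv /=; first exact: conj_wexpn.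
exact: (conj_wexpn k.+1 (conj_winv xuv)).
Qed.

Lemma wpowC u m n : (wpow u m ++ wpow u n) ~~ (wpow u n ++ wpow u m).
Proof. by apply: conj_wpow; symmetry; apply: conj_wpow. Qed.

Lemma wexpn_cat_comm u v k :
  (u ++ v) ~~ (v ++ u) -> wexpn (u ++ v) k ~~ (wexpn u k ++ wexpn v k).
Proof.
move=> uv; elim: k => [|k IHk]; first reflexivity.
rewrite !wexpnS IHk -catA (catA v) (conj_wexpn k (symmetry uv)).
by rewrite -!catA.
Qed.

Lemma wpow_cat_comm u v n :
  (u ++ v) ~~ (v ++ u) -> wpow (u ++ v) n ~~ (wpow u n ++ wpow v n).
Proof.
case: n => k uv /=; first exact: wexpn_cat_comm.
have vu' : (winv v ++ winv u) ~~ (winv u ++ winv v).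
  by rewrite -!winv_cat; apply: weq_winv.
change (wexpn (winv (u ++ v)) k.+1 ~~
        (wexpn (winv u) k.+1 ++ wexpn (winv v) k.+1)).
rewrite winv_cat (wexpn_cat_comm k.+1 vu').
by apply: conj_wexpn; symmetry; apply: conj_wexpn; symmetry.
Qed.

Section LeftOrderable.
Hypothesis LO : left_orderable R.

Lemma lo_torsion_free g k : wexpn g k.+1 ~~ [::] -> g ~~ [::].
Proof.
case: LO => _ [lt [lt_weq [lt_irr [lt_trans [lt_total lt_catl]]]]] gk.
have [//|[g_lt|lt_g]] := lt_total g [::].
- have : forall j, lt (wexpn g j.+1) [::].
    elim=> [|j IHj]; first by rewrite /wexpn /= cats0.
    rewrite wexpnS; apply: lt_trans g_lt.
    by have := lt_catl _ _ g IHj; rewrite cats0.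
  by move=> /(_ k) gk_lt; case: (lt_irr [::]); apply: lt_weq gk_lt.
- have : forall j, lt [::] (wexpn g j.+1).
    elim=> [|j IHj]; first by rewrite /wexpn /= cats0.
    rewrite wexpnS; apply: lt_trans lt_g _.
    by have := lt_catl _ _ g IHj; rewrite cats0.
  by move=> /(_ k) lt_gk; case: (lt_irr [::]); apply: lt_weq lt_gk => //; reflexivity.
Qed.

Lemma lo_torsion_free_wpow g (n : int) : n != 0 -> wpow g n ~~ [::] -> g ~~ [::].
Proof.
case: n => [[|k]|k] // _ gn; first exact: (lo_torsion_free gn).
by rewrite -(winvK g); apply: (weq_winv (lo_torsion_free gn)).
Qed.

Lemma lo_sqr_nil g : (g ++ g) ~~ [::] -> g ~~ [::].
Proof. by move=> gg; apply: (@lo_torsion_free _ 1); rewrite wexpnS /wexpn /= cats0. Qed.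

Lemma lo_nontrivial : ~ (forall s, [:: (s, false)] ~~ [::]).
Proof. by case: LO => -[w w_neq] _ gen1; apply: w_neq; apply: weq_all_nil. Qed.

End LeftOrderable.
End WordGroup.

Lemma B3_trivial_of_meridian (R : word genB3 -> Prop) :
  R braid_rel -> weq R [:: (s2, false)] [::] -> forall w, weq R w [::].
Proof.
move=> Rbr s2_1; have s2i_1 := letter_nil true s2_1.
apply: weq_all_nil => -[]; last exact: s2_1.
transitivity ([:: (s1, false)] ++ [:: (s1, false); (s1, true)]).
  by symmetry; exact: (weq_cancel R [:: (s1, false)] [::] s1 false).
transitivity ([:: (s1, false)] ++ [:: (s2, false)] ++ [:: (s1, false)] ++
   [:: (s2, true)] ++ [:: (s1, true)] ++ [:: (s2, true)]).
  by rewrite s2_1 s2i_1; reflexivity.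
exact: weq_relator.
Qed.

Lemma M1_filling_meridian_not_lo (p : int) :
  (p = 1 \/ p = -1)%R -> ~ left_orderable (M1_filling p 0).
Proof.
move=> p_unit LO; apply: (lo_nontrivial LO) => s.
apply: B3_trivial_of_meridian; first by left.
have : weq (M1_filling p 0) (M1_periph p 0) [::] by apply: weq_relator; right.
by case: p_unit => -> //= /weq_winv.
Qed.

Section KleinFilling.
Variables (p q : int).
Local Notation R := (M2_filling p q).
Local Notation "u ~~ v" := (weq R u v) (at level 70).
Local Hint Resolve weq_refl : core.
Local Notation x := [:: (gx, false)].
Local Notation xi := [:: (gx, true)].
Local Notation y := [:: (gy, false)].
Local Notation yi := [:: (gy, true)].

Lemma klein_conj_yi : (x ++ yi) ~~ (y ++ x).
Proof.
apply: weq_catV_nil; apply: (@weq_rot_nil _ _ yi (x ++ yi ++ xi)).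
exact: (weq_winv (weq_relator (or_introl erefl : R klein_rel))).
Qed.

Lemma klein_conj_y : (x ++ y) ~~ (yi ++ x).
Proof. exact: (conj_winv klein_conj_yi). Qed.

Lemma klein_yi_comm_x2 : (yi ++ x ++ x) ~~ ((x ++ x) ++ yi).
Proof.
symmetry; transitivity (x ++ (x ++ yi)); first by [].
rewrite klein_conj_yi; transitivity ((x ++ y) ++ x); first by [].
by rewrite klein_conj_y.
Qed.

Lemma M2_filling_not_lo : q != 0 -> ~ left_orderable R.
Proof.
move=> q_neq0 LO.
set A := wpow yi p ++ wpow yi q; set A' := wpow y p ++ wpow y q.
set B := wpow (x ++ x) q.
have AB_1 : (A ++ B) ~~ [::].
  rewrite -(weq_relator (or_intror erefl : R (M2_periph_phi p q))) -catA.
  apply: weq_catl; symmetry.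
  exact: (wpow_cat_comm q (klein_yi_comm_x2 : (yi ++ (x ++ x)) ~~ _)).
have A'B_1 : (A' ++ B) ~~ [::].
  apply: (@weq_rcancel_nil _ _ _ x).
  transitivity (x ++ (A ++ B)); last by rewrite AB_1.
  symmetry; rewrite /A /A' !catA (conj_wpow p klein_conj_yi) -(catA _ x).
  rewrite (conj_wpow q klein_conj_yi) -!catA; apply/weq_catl/weq_catl.
  exact: (conj_wpow q (x := x) (u := x ++ x) (v := x ++ x) (weq_refl _ _)).
have A'_invA : A' ~~ winv A.
  by rewrite /A /A' winv_cat !winv_wpow wpowC.
have A_A' : A ~~ A'.
  by apply: (@weq_trans _ _ _ (winv B)); [|symmetry];
    apply: weq_catV_nil; rewrite winvK.
have A_1 : A ~~ [::] by apply: (lo_sqr_nil LO); rewrite {1}A_A' A'_invA catVw.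
have x_1 : x ~~ [::].
  apply: (lo_sqr_nil LO); apply: (lo_torsion_free_wpow LO q_neq0).
  by transitivity (A ++ B); [rewrite A_1 | exact: AB_1].
have y_1 : y ~~ [::].
  apply: (lo_sqr_nil LO).
  transitivity (x ++ y ++ xi ++ y); last by apply: weq_relator; left.
  by rewrite x_1 (letter_nil true x_1); reflexivity.
by apply: (lo_nontrivial LO) => -[]; [exact: x_1 | exact: y_1].
Qed.

End KleinFilling.

Theorem proposition25 (p q : int) :
  gcdz p q = 1%N ->
  ~ (left_orderable (M1_filling p q) /\ left_orderable (M2_filling p q)).
Proof.
move=> pq_coprime [LO1 LO2].
have [q0|q_neq0] := eqVneq q 0; last exact: M2_filling_not_lo LO2.
subst q; apply: (M1_filling_meridian_not_lo _ LO1).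
by move: pq_coprime; rewrite gcdz0; case: p {LO1 LO2} => [[|[|k]]|[|k]] //= _;
  [left | right].
Qed.
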